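(* Let $\nu_n(x_0,x_1)$ ($n\ge 0$) be any nonvanishing functions and $\bar P_n(x;x_0,x_1)=\nu_n(x_0,x_1)P_n(x;x_0,x_1)$. Then for all $n\ge1$: $$\mathcal{A}_6\bar P_n=\frac{1}{(1-x_0^2)(1-x_1^2)}\Bigg\{\frac{\nu_n(q^{-\frac12}x_0,q^{-\frac12}x_1)}{\nu_{n+1}(x_0,x_1)}q^{-n-\frac52}\left(x_0^2x_1^2-q^{n+2}\right)^2\bar P_{n+1}$$ $$-q^{-n-\frac32}\left(\frac{\nu_n(q^{\frac12}x_0,q^{-\frac12}x_1)}{\nu_n(x_0,x_1)}(x_1^2-q^{n+1})^2+\frac{\nu_n(q^{-\frac12}x_0,q^{\frac12}x_1)}{\nu_n(x_0,x_1)}(x_0^2-q^{n+1})^2\right)\bar P_n+\frac{\nu_n(q^{\frac12}x_0,q^{\frac12}x_1)}{\nu_{n-1}(x_0,x_1)}q^{-n-\frac12}(1-q^n)^2\bar P_{n-1}\Bigg\},$$ where on the right-hand side $\bar P_m=\bar P_m(x;x_0,x_1)$.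
   Context: Let $q$ be a complex parameter with $0<|q|<1$, with a fixed choice of $q^{1/4}$ and $q^{k/4}:=(q^{1/4})^k$; $x,x_0,x_1$ are variables. Notation: $(y)_n=(y;q)_n=\prod_{i=1}^{n}(1-yq^{i-1})$, $(y_1,\dots,y_k)_n=(y_1)_n\cdots(y_k)_n$. Operators on functions $f(x,x_0,x_1)$: $\eth f(x,x_0,x_1)=f(q^{1/2}x,x_0,x_1)$, $\eth_0 f(x,x_0,x_1)=f(x,q^{1/2}x_0,x_1)$, $\eth_1 f(x,x_0,x_1)=f(x,x_0,q^{1/2}x_1)$, with powers and inverses defined accordingly; a function written to the left of an operator acts by multiplication after the operator is applied, and products of operators denote composition. For $n\ge0$, $$P_n(x;x_0,x_1)=(-1)^nq^{-\frac n2}\frac{\left(q,\frac{q}{x_0^2},\frac{q}{x_1^2}\right)_n}{\left(\frac{q^{n+1}}{x_0^2x_1^2}\right)_n}\sum_{k=0}^{n}q^k\frac{\left(q^{-n},\frac{q^{n+1}}{x_0^2x_1^2}\right)_k}{\left(q,q,\frac{q}{x_0^2},\frac{q}{x_1^2}\right)_k}\left(-q^{\frac12}x,-q^{\frac12}x^{-1}\right)_k$$ (the Askey–Wilson polynomial with parameters $(a,b,c,d)=(-q^{1/2},-q^{1/2},-q^{1/2}/x_0^2,-q^{1/2}/x_1^2)$). Let $\omega(x)=\frac{x(1+q^{1/2}x)}{q^{1/2}(1-x^2)(1-q^{1/2}x)}$ and, for $b\in\{0,1\}$, $$K_0(x_b;x)=-\frac{1}{1-x_b^2}\eth_b+\frac{(q^{\frac12}x+x_b^2)(q^{\frac32}x+x_b^2)}{q\,x(1-x_b^2)}\eth_b^{-1},\qquad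 G_0(x_b;x)=-\frac{1}{1-x_b^2}\eth_b+\frac{(q^{\frac12}x+x_b^2)(q^{\frac12}+x\,x_b^2)}{q^{\frac12}x(1-x_b^2)}\eth_b^{-1}.$$ Define (image of the curve $\mathbb{k}_6$ of the genus-two skein algebra) $$\mathcal{A}_6=\sum_{\epsilon=\pm1}\omega(x^\epsilon)\left\{K_0(x_0;x^\epsilon)\,K_0(x_1;x^\epsilon)\,\eth^{2\epsilon}-G_0(x_0;x)\,G_0(x_1;x)\right\}.$$ *)

From HB Require Import structures.
From mathcomp Require Import all_boot all_order all_algebra.
From mathcomp Require Export complex.
Set Implicit Arguments. Unset Strict Implicit. Unset Printing Implicit Defensive.
Import Order.TTheory GRing.Theory Num.Theory.
Local Open Scope ring_scope.

(* Functions of (x, x0, x1) over a field F.  The parameter r stands for the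
   fixed choice of q^(1/4); hence q = r^4 and q^(k/4) = r^k. *)
Definition fn (F : fieldType) := F -> F -> F -> F.

Section Defs.
Variable F : fieldType.
Variable r : F.
Local Notation q := (r ^+ 4).

Definition poch (y : F) (n : nat) : F := \prod_(i < n) (1 - y * q ^+ i).

(* Shift operator  eth^a eth_0^b eth_1^c : f(x,x0,x1) |-> f(q^(a/2) x, q^(b/2) x0, q^(c/2) x1) *)
Definition sh (a b c : int) (f : fn F) : fn F :=
  fun x x0 x1 => f (r ^ (2 * a) * x) (r ^ (2 * b) * x0) (r ^ (2 * c) * x1).

Definition shb (b : bool) (a : int) (f : fn F) : fn F :=
  if b then sh 0 0 a f else sh 0 a 0 f.

Definition K0 (b : bool) (e : int) (f : fn F) : fn F :=
  fun x x0 x1 =>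
    let xb := if b then x1 else x0 in
    let y := x ^ e in
    - (1 - xb ^+ 2)^-1 * shb b 1 f x x0 x1
    + ((r ^+ 2 * y + xb ^+ 2) * (r ^+ 6 * y + xb ^+ 2) / (q * y * (1 - xb ^+ 2)))
      * shb b (-1) f x x0 x1.

Definition G0 (b : bool) (f : fn F) : fn F :=
  fun x x0 x1 =>
    let xb := if b then x1 else x0 in
    - (1 - xb ^+ 2)^-1 * shb b 1 f x x0 x1
    + ((r ^+ 2 * x + xb ^+ 2) * (r ^+ 2 + x * xb ^+ 2) / (r ^+ 2 * x * (1 - xb ^+ 2)))
      * shb b (-1) f x x0 x1.

Definition omega (y : F) : F :=
  y * (1 + r ^+ 2 * y) / (r ^+ 2 * (1 - y ^+ 2) * (1 - r ^+ 2 * y)).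

Definition A6 (f : fn F) : fn F :=
  fun x x0 x1 =>
    \sum_(e <- [:: 1%Z; (-1)%Z])
      omega (x ^ e) *
        (K0 false e (K0 true e (sh (2 * e) 0 0 f)) x x0 x1
         - G0 false (G0 true f) x x0 x1).

Definition P (n : nat) : fn F :=
  fun x x0 x1 =>
    (-1) ^+ n * r ^- (2 * n)
    * (poch q n * poch (q / x0 ^+ 2) n * poch (q / x1 ^+ 2) n)
      / poch (q ^+ n.+1 / (x0 ^+ 2 * x1 ^+ 2)) n
    * \sum_(k < n.+1)
        q ^+ k * (poch (q ^- n) k * poch (q ^+ n.+1 / (x0 ^+ 2 * x1 ^+ 2)) k)
        / (poch q k * poch q k * poch (q / x0 ^+ 2) k * poch (q / x1 ^+ 2) k)
        * (poch (- (r ^+ 2 * x)) k * poch (- (r ^+ 2 / x)) k).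

Definition Pbar (nu : nat -> F -> F -> F) (n : nat) : fn F :=
  fun x x0 x1 => nu n x0 x1 * P n x x0 x1.

End Defs.

(* A_6 splits into four blocks, one for each shift eth_0^(+-1) eth_1^(+-1); a block only
   acts on x, with parameters x0, x1 shifted.  On the Askey-Wilson basis
   phi_k(x) = (-q^(1/2) x, -q^(1/2)/x)_k each block acts by a three-term recurrence in k.
   Writing P_n = N_n(x0,x1) sum_k c_(n,k)(x0,x1) phi_k, the coefficients of a block applied
   to P_n at the shifted parameters are, term by term, a fixed multiple of the c_(m,k) at
   the original parameters, with m = n+1 for the shifts (-,-), m = n for (+,-) and (-,+),
   and m = n-1 for (+,+); comparing the normalisations N then gives the three terms. *)

From HB Require Import structures.
From mathcomp Require Import all_boot all_order all_algebra complex.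
From mathcomp Require Import ring zify.
Import Order.TTheory GRing.Theory Num.Theory.
Local Open Scope ring_scope.
Set Implicit Arguments. Unset Strict Implicit.

Ltac neq0_side := repeat (apply/andP; split); try assumption;
  repeat first [assumption | apply: mulf_neq0 | apply: expf_neq0].

Lemma big_ord_widen0 (V : nmodType) (f : nat -> V) a b : (a <= b)%N ->
  (forall k, (a <= k)%N -> f k = 0) -> \sum_(k < a) f k = \sum_(k < b) f k.
Proof.
move=> hab hf; rewrite (big_ord_widen _ _ hab) big_mkcond /=; apply: eq_bigr => k _.
by case: ltnP => // /hf.
Qed.

Lemma sum_three_term (R : comRingType) (u al be ga b : nat -> R) N :
  al 0%N = 0 -> u N = 0 -> u N.+1 = 0 ->
  \sum_(k < N.+1) u k * (al k * b k.-1 + be k * b k + ga k * b k.+1) =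
  \sum_(j < N.+1) (u j.+1 * al j.+1 + u j * be j
                  + (if (j : nat) is j'.+1 then u j' * ga j' else 0)) * b j.
Proof.
move=> al0 uN uN1.
have down : \sum_(k < N.+1) u k * (al k * b k.-1) = \sum_(j < N.+1) u j.+1 * al j.+1 * b j.
  rewrite big_ord_recl big_ord_recr /= al0 uN1 !mul0r mulr0 add0r addr0.
  by apply: eq_bigr => k _; rewrite mulrA.
have up : \sum_(k < N.+1) u k * (ga k * b k.+1) =
          \sum_(j < N.+1) (if (j : nat) is j'.+1 then u j' * ga j' else 0) * b j.
  rewrite [LHS]big_ord_recr [RHS]big_ord_recl /= uN !mul0r addr0 add0r.
  by apply: eq_bigr => k _; rewrite mulrA.
under eq_bigr do rewrite !mulrDr.
rewrite !big_split /= down up -!big_split /=.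
by apply: eq_bigr => k _; rewrite mulrA !mulrDl.
Qed.

Section QPochhammer.
Variables (F : fieldType) (r : F).
Local Notation q := (r ^+ 4).
Local Notation poch := (poch r).

Lemma poch0 y : poch y 0 = 1.
Proof. by rewrite /poch big_ord0. Qed.

Lemma pochS y n : poch y n.+1 = poch y n * (1 - y * q ^+ n).
Proof. by rewrite /poch big_ord_recr. Qed.

Lemma pochSl y n : poch y n.+1 = (1 - y) * poch (y * q) n.
Proof.
rewrite /poch big_ord_recl /= expr0 mulr1; congr (_ * _).
by apply: eq_bigr => i _; rewrite /bump /= add1n exprS mulrA.
Qed.

Lemma poch1 y : poch y 1 = 1 - y.
Proof. by rewrite pochS poch0 mul1r mulr1. Qed.

Lemma pochSl_eq y z n : y * q = z -> poch y n.+1 = (1 - y) * poch z n.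
Proof. by move=> <-; rewrite pochSl. Qed.

Lemma pochSSl_eq y z n : y * q ^+ 2 = z -> poch y n.+2 = (1 - y) * (1 - y * q) * poch z n.
Proof. by move=> <-; rewrite !pochSl -mulrA -expr2 mulrA. Qed.

Lemma pochqE y z n : y * q = z -> 1 - y != 0 ->
  poch z n = poch y n * (1 - y * q ^+ n) / (1 - y).
Proof. by move=> <- hy; apply: (mulfI hy); rewrite -pochSl pochS [RHS]mulrC divfK. Qed.

Lemma pochqVE y z n : y * q = z -> 1 - y * q ^+ n != 0 ->
  poch y n = (1 - y) * poch z n / (1 - y * q ^+ n).
Proof. by move=> <- hy; apply: (mulIf hy); rewrite -pochSl pochS divfK. Qed.

Lemma poch_eq y z n : y = z -> poch y n = poch z n.
Proof. by move->. Qed.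

Lemma poch_neq0 y n : (forall j, (j < n)%N -> y * q ^+ j != 1) -> poch y n != 0.
Proof.
by move=> hy; apply/prodf_neq0 => j _; rewrite subr_eq0 eq_sym hy.
Qed.

Lemma poch_qNn_eq0 (hr : r != 0) n m : poch (q ^- n) (n.+1 + m) = 0.
Proof.
elim: m => [|m IH]; last by rewrite addnS pochS IH mul0r.
by rewrite addn0 pochS mulVf ?subrr ?mulr0 // !expf_neq0.
Qed.

End QPochhammer.

Section A6Blocks.
Variables (F : fieldType) (r : F).
Local Notation q := (r ^+ 4).
Local Notation poch := (poch r).

Definition aw_basis k (x : F) : F := poch (- (r ^+ 2 * x)) k * poch (- (r ^+ 2 / x)) k.

(* Coefficients of eth_b (e = true) and of eth_b^-1 (e = false) in K_0(x_b; y) and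
   G_0(x_b; x), where A stands for x_b^2. *)
Definition K0_coef (e : bool) (A y : F) : F :=
  if e then - (1 - A)^-1 else (r ^+ 2 * y + A) * (r ^+ 6 * y + A) / (q * y * (1 - A)).
Definition G0_coef (e : bool) (A x : F) : F :=
  if e then - (1 - A)^-1 else (r ^+ 2 * x + A) * (r ^+ 2 + x * A) / (r ^+ 2 * x * (1 - A)).

(* The part of A_6 carrying eth_0^(+-1) eth_1^(+-1) (sign + iff e0, resp. e1 is true), for
   A = x0^2, B = x1^2 and g the function of x obtained after shifting x0 and x1. *)
Definition A6_block (e0 e1 : bool) (g : F -> F) (x A B : F) : F :=
  omega r x * K0_coef e0 A x * K0_coef e1 B x * g (q * x)
  + omega r x^-1 * K0_coef e0 A x^-1 * K0_coef e1 B x^-1 * g (q^-1 * x)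
  - (omega r x + omega r x^-1) * G0_coef e0 A x * G0_coef e1 B x * g x.

Lemma A6E (f : fn F) x x0 x1 :
  A6 r f x x0 x1 =
    A6_block true true (fun y => f y (r ^+ 2 * x0) (r ^+ 2 * x1)) x (x0 ^+ 2) (x1 ^+ 2)
  + A6_block true false (fun y => f y (r ^+ 2 * x0) (r ^- 2 * x1)) x (x0 ^+ 2) (x1 ^+ 2)
  + A6_block false true (fun y => f y (r ^- 2 * x0) (r ^+ 2 * x1)) x (x0 ^+ 2) (x1 ^+ 2)
  + A6_block false false (fun y => f y (r ^- 2 * x0) (r ^- 2 * x1)) x (x0 ^+ 2) (x1 ^+ 2).
Proof.
rewrite /A6 /K0 /G0 /shb /sh !big_cons big_nil /=.
rewrite -[r ^ (2 * 1%Z)]/(r ^+ 2) -[r ^ (2 * (-1)%Z)]/(r ^- 2) -[r ^ (2 * 0%Z)]/1.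
rewrite -[r ^ (2 * (2 * 1%Z))]/q -[r ^ (2 * (2 * (-1)%Z))]/(q^-1).
by rewrite !mul1r expr1z exprN1 /A6_block /K0_coef /G0_coef /=; ring.
Qed.

Definition block_alpha (e0 e1 : bool) (A B : F) k : F :=
  let Q := q ^+ k in let d := (1 - A) * (1 - B) in
  match e0, e1 with
  | true, true => (1 - Q) ^+ 2 / (q * d)
  | true, false => (1 - Q) ^+ 2 * (q * Q - B) * (Q - B) / (Q * r ^+ 6 * d)
  | false, true => (1 - Q) ^+ 2 * (q * Q - A) * (Q - A) / (Q * r ^+ 6 * d)
  | false, false =>
      (1 - Q) ^+ 2 * (Q - A) * (Q - B) * (q * Q - A) * (q * Q - B) / (Q ^+ 2 * r ^+ 8 * d)
  end.

Definition block_beta (e0 e1 : bool) (A B : F) k : F :=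
  let Q := q ^+ k in let d := (1 - A) * (1 - B) in
  match e0, e1 with
  | true, true => 0
  | true, false => - (B - q * Q) ^+ 2 / (Q * r ^+ 6 * d)
  | false, true => - (A - q * Q) ^+ 2 / (Q * r ^+ 6 * d)
  | false, false =>
     ( - A ^+ 2 * B ^+ 2 * (1 + q)
       + Q * (q * (A * B ^+ 2 + A ^+ 2 * B + 2 * A ^+ 2 * B ^+ 2)
              + q ^+ 2 * (2 * A * B + A * B ^+ 2 + A ^+ 2 * B))
       - Q ^+ 2 * (2 * q ^+ 2 * (A * B + A * B ^+ 2 + A ^+ 2 * B) + 2 * q ^+ 3 * (B + A + A * B))
       + Q ^+ 3 * (q ^+ 3 * (B + A + 2 * A * B) + q ^+ 4 * (2 + B + A))
       - Q ^+ 4 * q ^+ 4 * (1 + q)) / (Q ^+ 2 * q ^+ 3 * d)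
  end.

Definition block_gamma (e0 e1 : bool) (A B : F) k : F :=
  if e0 || e1 then 0
  else (A * B - q ^+ 2 * q ^+ k) ^+ 2 / ((q ^+ k) ^+ 2 * r ^+ 12 * ((1 - A) * (1 - B))).

Lemma block_alpha0 e0 e1 A B : block_alpha e0 e1 A B 0 = 0.
Proof. by case: e0; case: e1; rewrite /block_alpha subrr expr0n /= !mul0r. Qed.

Lemma A6_block_basis e0 e1 k (x A B : F) (hr : r != 0) (hx : x != 0)
  (hx2 : 1 - x ^+ 2 != 0) (hx3 : 1 - r ^+ 2 * x != 0) (hx4 : x - r ^+ 2 != 0)
  (hA : 1 - A != 0) (hB : 1 - B != 0) :
  A6_block e0 e1 (aw_basis k) x A B =
    block_alpha e0 e1 A B k * aw_basis k.-1 x + block_beta e0 e1 A B k * aw_basis k x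
    + block_gamma e0 e1 A B k * aw_basis k.+1 x.
Proof.
have hq : q != 0 by rewrite expf_neq0.
have hx2' : x ^+ 2 - 1 != 0 by rewrite -opprB oppr_eq0.
have hA' : A - 1 != 0 by rewrite -opprB oppr_eq0.
have hB' : B - 1 != 0 by rewrite -opprB oppr_eq0.
rewrite /A6_block /block_alpha /block_beta /block_gamma /aw_basis /omega.
case: k => [|[|i]] /=.
- rewrite !pochS !poch0 !expr0 !mulr1 !mul1r.
  by case: e0; case: e1; rewrite /K0_coef /G0_coef /=; field; neq0_side.
- rewrite !pochS !poch0 !expr0 !mulr1 !mul1r.
  by case: e0; case: e1; rewrite /K0_coef /G0_coef /=; field; neq0_side.
(* Reduce every Pochhammer symbol to one of length i at X or Y, so that they cancel. *)
set X := - (r ^+ 6 * x); set Y := - (r ^+ 6 / x).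
rewrite (@poch_eq _ _ (- (r ^+ 2 * (q * x))) X i.+2); last by rewrite /X; ring.
rewrite (@pochSSl_eq _ _ (- (r ^+ 2 / (q * x))) Y i); last by rewrite /Y; field; neq0_side.
rewrite (@pochSSl_eq _ _ (- (r ^+ 2 * (q^-1 * x))) X i); last by rewrite /X; field.
rewrite (@poch_eq _ _ (- (r ^+ 2 / (q^-1 * x))) Y i.+2); last by rewrite /Y; field; neq0_side.
rewrite (@pochSl_eq _ _ (- (r ^+ 2 * x)) X i.+2); last by rewrite /X; ring.
rewrite (@pochSl_eq _ _ (- (r ^+ 2 / x)) Y i.+2); last by rewrite /Y; field; neq0_side.
rewrite (@pochSl_eq _ _ (- (r ^+ 2 * x)) X i.+1); last by rewrite /X; ring.
rewrite (@pochSl_eq _ _ (- (r ^+ 2 / x)) Y i.+1); last by rewrite /Y; field; neq0_side.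
rewrite (@pochSl_eq _ _ (- (r ^+ 2 * x)) X i); last by rewrite /X; ring.
rewrite (@pochSl_eq _ _ (- (r ^+ 2 / x)) Y i); last by rewrite /Y; field; neq0_side.
rewrite !pochS /X /Y !exprS.
have hQ : q ^+ i != 0 by rewrite !expf_neq0.
by case: e0; case: e1; rewrite /K0_coef /G0_coef /=; field; neq0_side.
Qed.

End A6Blocks.

Lemma neq_eq_r (F : eqType) (X M M' : F) : M = M' -> X != M' -> X != M.
Proof. by move->. Qed.

(* Proves X != M from H : forall c e f, X != q^c Q^e N^f when M is, up to ring
   normalisation, of that form for small c, e, f. *)
Ltac neq_power H :=
  let close c e f := eapply neq_eq_r; [ | exact: (H c e f) ]; by ring in
  let close_c e f := first [ close 0%N e f | close 1%N e f | close 2%N e f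
                           | close 3%N e f | close 4%N e f | close 5%N e f ] in
  first [ close_c 0%N 0%N | close_c 1%N 0%N | close_c 0%N 1%N | close_c 1%N 1%N ].

Ltac generic_neq := match goal with H : forall c e f : nat, _ |- _ => neq_power H end.

Ltac generic_side := repeat (apply/andP; split); try assumption; try exact: oner_neq0;
  try (by rewrite !expf_neq0);
  try (rewrite subr_eq0; first [generic_neq | rewrite eq_sym; generic_neq]).

Section AWCoefficients.
Variables (F : fieldType) (r : F).
Local Notation q := (r ^+ 4).
Local Notation poch := (poch r).

Definition aw_coef n (A B : F) k : F :=
  q ^+ k * (poch (q ^- n) k * poch (q ^+ n.+1 / (A * B)) k)
  / (poch q k * poch q k * poch (q / A) k * poch (q / B) k).

Definition aw_norm n (A B : F) : F :=
  (-1) ^+ n * r ^- (2 * n) * (poch q n * poch (q / A) n * poch (q / B) n)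
  / poch (q ^+ n.+1 / (A * B)) n.

Definition aw_sum n x (A B : F) : F := \sum_(k < n.+1) aw_coef n A B k * aw_basis r k x.

Lemma PE n x x0 x1 :
  P r n x x0 x1 = aw_norm n (x0 ^+ 2) (x1 ^+ 2) * aw_sum n x (x0 ^+ 2) (x1 ^+ 2).
Proof. by []. Qed.

Lemma aw_coef_eq0 (hr : r != 0) n A B k : (n < k)%N -> aw_coef n A B k = 0.
Proof. by move=> hk; rewrite /aw_coef -(subnKC hk) poch_qNn_eq0 // !(mul0r, mulr0). Qed.

(* Coefficient of aw_basis j in a block applied to aw_sum n x A' B', once every term
   has been expanded by A6_block_basis. *)
Definition block_coef e0 e1 n (A' B' A B : F) j : F :=
  aw_coef n A' B' j.+1 * block_alpha r e0 e1 A B j.+1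
  + aw_coef n A' B' j * block_beta r e0 e1 A B j
  + (if j is j'.+1 then aw_coef n A' B' j' * block_gamma r e0 e1 A B j' else 0).

Lemma qS k : q ^+ k.+1 = q * q ^+ k.
Proof. exact: exprS. Qed.

Variables (A B : F).
Hypotheses (hr : r != 0) (hA0 : A != 0) (hB0 : B != 0)
  (hA : forall m : nat, A != q ^+ m) (hB : forall m : nat, B != q ^+ m)
  (hAB : forall m : nat, A * B != q ^+ m) (hq : forall m : nat, (0 < m)%N -> q ^+ m != 1).

Let q_pow c i e n f : q ^+ c * (q ^+ i) ^+ e * (q ^+ n) ^+ f = q ^+ (c + i * e + n * f).
Proof. by rewrite !exprD !exprM. Qed.

Let A_generic i n c e f : A != q ^+ c * (q ^+ i) ^+ e * (q ^+ n) ^+ f.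
Proof. by rewrite q_pow. Qed.
Let B_generic i n c e f : B != q ^+ c * (q ^+ i) ^+ e * (q ^+ n) ^+ f.
Proof. by rewrite q_pow. Qed.
Let AB_generic i n c e f : A * B != q ^+ c * (q ^+ i) ^+ e * (q ^+ n) ^+ f.
Proof. by rewrite q_pow. Qed.
Let one_generic i n c e f : 1 != q ^+ c.+1 * (q ^+ i) ^+ e * (q ^+ n) ^+ f.
Proof. by rewrite q_pow eq_sym hq. Qed.
Let one_generic_pos i n :
  (0 < n)%N -> forall c e f, 1 != q ^+ c * (q ^+ i) ^+ e * (q ^+ n) ^+ f.+1.
Proof. by move=> hn c e f; rewrite q_pow eq_sym hq // addn_gt0 orbC muln_gt0 hn. Qed.

Let poch_q_neq0 i : poch q i != 0.
Proof. by apply: poch_neq0 => j _; rewrite -exprS hq. Qed.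

Let poch_div_neq0 X c i : X != 0 -> (forall m, X != q ^+ m) -> poch (q ^+ c / X) i != 0.
Proof.
move=> hX hXq; apply: poch_neq0 => j _; rewrite mulrAC -exprD.
by apply: contra_neq (hXq (c + j)) => /(canRL (divfK hX)); rewrite mul1r.
Qed.

(* Suffixes pp, pm, mp, mm give the directions of the shifts of x0 and x1. *)
Lemma block_coef_mm n j : (0 < n)%N ->
  block_coef false false n (q^-1 * A) (q^-1 * B) A B j =
  - A * B * (A * B - q ^+ 2 * q ^+ n) * (1 - q * q ^+ n) * (1 - q / A) * (1 - q / B)
    / (q ^+ n * r ^+ 12 * ((1 - A) * (1 - B))) * aw_coef n.+1 A B j.
Proof.
move=> hn; rewrite /block_coef /aw_coef /block_alpha /block_beta /block_gamma /=.
rewrite (_ : q / (q^-1 * A) = q ^+ 2 / A); last by field; neq0_side.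
rewrite (_ : q / (q^-1 * B) = q ^+ 2 / B); last by field; neq0_side.
rewrite (_ : q ^+ n.+1 / (q^-1 * A * (q^-1 * B)) = q ^+ n.+3 / (A * B)); last first.
  by rewrite !qS; field; neq0_side.
case: j => [|i].
  move: (A_generic 0 n) (B_generic 0 n) (AB_generic 0 n) (one_generic 0 n) (one_generic_pos 0 hn).
  rewrite !poch1 !poch0 !expr0 !expr1 ?qS => ? ? ? ? ?.
  by field; generic_side.
rewrite (@pochSl_eq _ _ (q ^- n.+1) (q ^- n) i); last by rewrite qS; field; neq0_side.
rewrite (@pochSl_eq _ _ (q ^+ n.+2 / (A * B)) (q ^+ n.+3 / (A * B)) i); last first.
  by rewrite !qS; field; neq0_side.
rewrite (@pochSl_eq _ _ (q / A) (q ^+ 2 / A) i); last by field.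
rewrite (@pochSl_eq _ _ (q / B) (q ^+ 2 / B) i); last by field.
have := poch_div_neq0 2 i hA0 hA; have := poch_div_neq0 2 i hB0 hB; have := poch_q_neq0 i.
move: (A_generic i n) (B_generic i n) (AB_generic i n) (one_generic i n) (one_generic_pos i hn).
rewrite !pochS !qS.
set Q := q ^+ i; set N := q ^+ n => ? ? ? ? ? ? ? ?.
have hQ : Q != 0 by rewrite !expf_neq0.
have hN : N != 0 by rewrite !expf_neq0.
by field; generic_side.
Qed.

Lemma block_coef_pm n j : (0 < n)%N ->
  block_coef true false n (q * A) (q^-1 * B) A B j =
  - (B - q * q ^+ n) * B * (1 - q ^+ n / A) * (1 - q / B)
    / (q ^+ n * r ^+ 6 * ((1 - A) * (1 - B)) * (1 - A^-1)) * aw_coef n A B j.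
Proof.
move=> hn; rewrite /block_coef /aw_coef /block_alpha /block_beta /block_gamma /=.
rewrite (_ : q / (q * A) = q ^+ 0 / A); last by field; neq0_side.
rewrite (_ : q / (q^-1 * B) = q ^+ 2 / B); last by field; neq0_side.
rewrite (_ : q ^+ n.+1 / (q * A * (q^-1 * B)) = q ^+ n.+1 / (A * B)); last first.
  by field; neq0_side.
case: j => [|i].
  move: (A_generic 0 n) (B_generic 0 n) (AB_generic 0 n) (one_generic 0 n) (one_generic_pos 0 hn).
  rewrite !poch1 !poch0 !expr0 !expr1 ?qS => ? ? ? ? ?.
  by field; generic_side.
have := poch_div_neq0 0 1 hA0 hA; rewrite poch1 => hA1.
rewrite (@pochqE _ _ (q ^+ 0 / A) (q / A) i.+1) //; last by field.
rewrite (@pochSl_eq _ _ (q / B) (q ^+ 2 / B) i); last by field.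
have := poch_div_neq0 0 i hA0 hA; have := poch_div_neq0 2 i hB0 hB; have := poch_q_neq0 i.
move: (A_generic i n) (B_generic i n) (AB_generic i n) (one_generic i n) (one_generic_pos i hn).
rewrite !pochS !qS.
set Q := q ^+ i; set N := q ^+ n => ? ? ? ? ? ? ? ?.
have hQ : Q != 0 by rewrite !expf_neq0.
have hN : N != 0 by rewrite !expf_neq0.
by field; generic_side.
Qed.

Lemma block_coef_mp n j : (0 < n)%N ->
  block_coef false true n (q^-1 * A) (q * B) A B j =
  - (A - q * q ^+ n) * A * (1 - q ^+ n / B) * (1 - q / A)
    / (q ^+ n * r ^+ 6 * ((1 - A) * (1 - B)) * (1 - B^-1)) * aw_coef n A B j.
Proof.
move=> hn; rewrite /block_coef /aw_coef /block_alpha /block_beta /block_gamma /=.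
rewrite (_ : q / (q * B) = q ^+ 0 / B); last by field; neq0_side.
rewrite (_ : q / (q^-1 * A) = q ^+ 2 / A); last by field; neq0_side.
rewrite (_ : q ^+ n.+1 / (q^-1 * A * (q * B)) = q ^+ n.+1 / (A * B)); last first.
  by field; neq0_side.
case: j => [|i].
  move: (A_generic 0 n) (B_generic 0 n) (AB_generic 0 n) (one_generic 0 n) (one_generic_pos 0 hn).
  rewrite !poch1 !poch0 !expr0 !expr1 ?qS => ? ? ? ? ?.
  by field; generic_side.
have := poch_div_neq0 0 1 hB0 hB; rewrite poch1 => hB1.
rewrite (@pochqE _ _ (q ^+ 0 / B) (q / B) i.+1) //; last by field.
rewrite (@pochSl_eq _ _ (q / A) (q ^+ 2 / A) i); last by field.
have := poch_div_neq0 2 i hA0 hA; have := poch_div_neq0 0 i hB0 hB; have := poch_q_neq0 i.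
move: (A_generic i n) (B_generic i n) (AB_generic i n) (one_generic i n) (one_generic_pos i hn).
rewrite !pochS !qS.
set Q := q ^+ i; set N := q ^+ n => ? ? ? ? ? ? ? ?.
have hQ : Q != 0 by rewrite !expf_neq0.
have hN : N != 0 by rewrite !expf_neq0.
by field; generic_side.
Qed.

Lemma block_coef_pp n j :
  block_coef true true n.+1 (q * A) (q * B) A B j =
  - (1 - q ^+ n.+1) * (1 - q ^+ n.+1 / (q * A * B))
    / (q ^+ n.+1 * ((1 - A) * (1 - B)) * (1 - A^-1) * (1 - B^-1)) * aw_coef n A B j.
Proof.
rewrite /block_coef /aw_coef /block_alpha /block_beta /block_gamma /=.
rewrite (_ : q / (q * A) = q ^+ 0 / A); last by field; neq0_side.
rewrite (_ : q / (q * B) = q ^+ 0 / B); last by field; neq0_side.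
rewrite (_ : q ^+ n.+2 / (q * A * (q * B)) = q ^+ n / (A * B)); last first.
  by rewrite !qS; field; neq0_side.
case: j => [|i].
  move: (A_generic 0 n) (B_generic 0 n) (AB_generic 0 n) (one_generic 0 n).
  rewrite !poch1 !poch0 !expr0 !expr1 ?qS => ? ? ? ?.
  by field; generic_side.
have hn1 : 1 - q ^- n.+1 != 0 by rewrite subr_eq0 eq_sym invr_eq1 hq.
have := poch_div_neq0 0 1 hA0 hA; rewrite poch1 => hA1.
have := poch_div_neq0 0 1 hB0 hB; rewrite poch1 => hB1.
have := poch_div_neq0 n 1 (mulf_neq0 hA0 hB0) hAB; rewrite poch1 => hAB1.
rewrite (@pochqE _ _ (q ^- n.+1) (q ^- n) i.+1) //; last by rewrite qS; field; neq0_side.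
rewrite (@pochqE _ _ (q ^+ n / (A * B)) (q ^+ n.+1 / (A * B)) i.+1) //; last first.
  by rewrite qS; field; neq0_side.
rewrite (@pochqE _ _ (q ^+ 0 / A) (q / A) i.+1) //; last by field.
rewrite (@pochqE _ _ (q ^+ 0 / B) (q / B) i.+1) //; last by field.
have := poch_div_neq0 0 i hA0 hA; have := poch_div_neq0 0 i hB0 hB; have := poch_q_neq0 i.
move: (A_generic i n) (B_generic i n) (AB_generic i n) (one_generic i n).
rewrite !pochS !qS.
set Q := q ^+ i; set N := q ^+ n => ? ? ? ? ? ? ?.
have hQ : Q != 0 by rewrite !expf_neq0.
have hN : N != 0 by rewrite !expf_neq0.
by field; generic_side.
Qed.

Let sign_neq0 n : (-1) ^+ n != 0 :> F.
Proof. by rewrite expf_neq0 // oppr_eq0 oner_neq0. Qed.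

Lemma aw_norm_mm n :
  aw_norm n.+1 A B =
  - r ^- 2 * (1 - q * q ^+ n) * (1 - q / A) * (1 - q / B) / (1 - q ^+ n.+2 / (A * B))
  * aw_norm n (q^-1 * A) (q^-1 * B).
Proof.
rewrite /aw_norm pochS.
rewrite (_ : q / (q^-1 * A) = q ^+ 2 / A); last by field; neq0_side.
rewrite (_ : q / (q^-1 * B) = q ^+ 2 / B); last by field; neq0_side.
rewrite (_ : q ^+ n.+1 / (q^-1 * A * (q^-1 * B)) = q ^+ n.+3 / (A * B)); last first.
  by rewrite !qS; field; neq0_side.
rewrite (@pochSl_eq _ _ (q / A) (q ^+ 2 / A) n); last by field.
rewrite (@pochSl_eq _ _ (q / B) (q ^+ 2 / B) n); last by field.
rewrite (@pochSl_eq _ _ (q ^+ n.+2 / (A * B)) (q ^+ n.+3 / (A * B)) n); last first.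
  by rewrite !qS; field; neq0_side.
have := poch_div_neq0 n.+2 1 (mulf_neq0 hA0 hB0) hAB; rewrite poch1 => hAB1.
have := poch_div_neq0 n.+3 n (mulf_neq0 hA0 hB0) hAB.
have := sign_neq0 n; have : r ^+ (2 * n) != 0 by rewrite expf_neq0.
rewrite [(-1) ^+ n.+1]exprS mulnS exprD [(r ^+ 2 * _)^-1]invfM => ? ? ?.
field; neq0_side.
by rewrite subr_eq0 hAB.
Qed.

Lemma aw_norm_pp n :
  aw_norm n A B =
  - r ^+ 2 * (1 - q ^+ n / (A * B)) / ((1 - q * q ^+ n) * (1 - A^-1) * (1 - B^-1))
  * aw_norm n.+1 (q * A) (q * B).
Proof.
rewrite /aw_norm pochS.
rewrite (_ : q / (q * A) = q ^+ 0 / A); last by field; neq0_side.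
rewrite (_ : q / (q * B) = q ^+ 0 / B); last by field; neq0_side.
rewrite (_ : q ^+ n.+2 / (q * A * (q * B)) = q ^+ n / (A * B)); last first.
  by rewrite !qS; field; neq0_side.
rewrite (@pochSl_eq _ _ (q ^+ 0 / A) (q / A) n); last by field.
rewrite (@pochSl_eq _ _ (q ^+ 0 / B) (q / B) n); last by field.
rewrite (@pochSl_eq _ _ (q ^+ n / (A * B)) (q ^+ n.+1 / (A * B)) n); last first.
  by rewrite qS; field; neq0_side.
have := poch_div_neq0 n.+1 n (mulf_neq0 hA0 hB0) hAB.
have := sign_neq0 n; have : r ^+ (2 * n) != 0 by rewrite expf_neq0.
have : A * B - q ^+ n != 0 by rewrite subr_eq0 hAB.
have : 1 - q * q ^+ n != 0 by rewrite subr_eq0 eq_sym -exprS hq.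
have : A - 1 != 0 by rewrite subr_eq0 (hA 0).
have : B - 1 != 0 by rewrite subr_eq0 (hB 0).
rewrite [(-1) ^+ n.+1]exprS mulnS exprD [(r ^+ 2 * _)^-1]invfM !qS => ? ? ? ? ? ? ?.
by field; neq0_side.
Qed.

Lemma aw_norm_pm n :
  aw_norm n A B =
  (1 - q ^+ n / A) * (1 - q / B) / ((1 - A^-1) * (1 - q * q ^+ n / B))
  * aw_norm n (q * A) (q^-1 * B).
Proof.
rewrite /aw_norm.
rewrite (_ : q / (q * A) = q ^+ 0 / A); last by field; neq0_side.
rewrite (_ : q / (q^-1 * B) = q ^+ 2 / B); last by field; neq0_side.
rewrite (_ : q ^+ n.+1 / (q * A * (q^-1 * B)) = q ^+ n.+1 / (A * B)); last first.
  by field; neq0_side.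
have := poch_div_neq0 0 1 hA0 hA; rewrite poch1 => hA1.
have : 1 - q / B * q ^+ n != 0.
  by have := poch_div_neq0 n.+1 1 hB0 hB; rewrite poch1 qS mulrAC.
move=> hBn.
rewrite (@pochqE _ _ (q ^+ 0 / A) (q / A) n) //; last by field.
rewrite (@pochqVE _ _ (q / B) (q ^+ 2 / B) n) //; last by field.
have := poch_div_neq0 n.+1 n (mulf_neq0 hA0 hB0) hAB.
have := sign_neq0 n; have : r ^+ (2 * n) != 0 by rewrite expf_neq0.
have : B - q * q ^+ n != 0 by rewrite subr_eq0 -exprS hB.
have : A - 1 != 0 by rewrite subr_eq0 (hA 0).
move=> ? ? ? ? ?.
by field; neq0_side.
Qed.

Lemma aw_norm_mp n :
  aw_norm n A B =
  (1 - q ^+ n / B) * (1 - q / A) / ((1 - B^-1) * (1 - q * q ^+ n / A))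
  * aw_norm n (q^-1 * A) (q * B).
Proof.
rewrite /aw_norm.
rewrite (_ : q / (q * B) = q ^+ 0 / B); last by field; neq0_side.
rewrite (_ : q / (q^-1 * A) = q ^+ 2 / A); last by field; neq0_side.
rewrite (_ : q ^+ n.+1 / (q^-1 * A * (q * B)) = q ^+ n.+1 / (A * B)); last first.
  by field; neq0_side.
have := poch_div_neq0 0 1 hB0 hB; rewrite poch1 => hB1.
have : 1 - q / A * q ^+ n != 0.
  by have := poch_div_neq0 n.+1 1 hA0 hA; rewrite poch1 qS mulrAC.
move=> hAn.
rewrite (@pochqE _ _ (q ^+ 0 / B) (q / B) n) //; last by field.
rewrite (@pochqVE _ _ (q / A) (q ^+ 2 / A) n) //; last by field.
have := poch_div_neq0 n.+1 n (mulf_neq0 hA0 hB0) hAB.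
have := sign_neq0 n; have : r ^+ (2 * n) != 0 by rewrite expf_neq0.
have : A - q * q ^+ n != 0 by rewrite subr_eq0 -exprS hA.
have : B - 1 != 0 by rewrite subr_eq0 (hB 0).
move=> ? ? ? ? ?.
by field; neq0_side.
Qed.

End AWCoefficients.

Section Assembly.
Variables (F : fieldType) (r : F).
Local Notation q := (r ^+ 4).

Lemma A6_block_scale e0 e1 (c : F) g x A B :
  A6_block r e0 e1 (fun y => c * g y) x A B = c * A6_block r e0 e1 g x A B.
Proof. by rewrite /A6_block; ring. Qed.

Lemma A6_block_Pbar e0 e1 (nu : nat -> F -> F -> F) n (a b x A B : F) :
  A6_block r e0 e1 (fun y => Pbar r nu n y a b) x A B
  = nu n a b * A6_block r e0 e1 (fun y => P r n y a b) x A B.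
Proof. exact: A6_block_scale. Qed.

Lemma P_funE n a0 a1 :
  (fun y => P r n y a0 a1)
  = (fun y => aw_norm r n (a0 ^+ 2) (a1 ^+ 2) * aw_sum r n y (a0 ^+ 2) (a1 ^+ 2)).
Proof. by []. Qed.

Lemma aw_sum_widen (hr : r != 0) n N x A B : (n < N)%N ->
  aw_sum r n x A B = \sum_(k < N) aw_coef r n A B k * aw_basis r k x.
Proof.
move=> hN; apply: (big_ord_widen0 (f := fun k => aw_coef r n A B k * aw_basis r k x)) => // k hk.
by rewrite aw_coef_eq0 ?mul0r.
Qed.

Lemma A6_block_sum (hr : r != 0) e0 e1 n N x A' B' A B : (n < N)%N ->
  A6_block r e0 e1 (fun y => aw_sum r n y A' B') x A B
  = \sum_(k < N) aw_coef r n A' B' k * A6_block r e0 e1 (aw_basis r k) x A B.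
Proof.
move=> hN; rewrite /A6_block !(@aw_sum_widen hr n N _ A' B' hN) !mulr_sumr -!big_split -sumrB /=.
by apply: eq_bigr => k _; ring.
Qed.

Lemma A6_block_aw e0 e1 n m (A' B' A B x K rho C : F)
  (hr : r != 0) (hx : x != 0) (hx2 : 1 - x ^+ 2 != 0)
  (hx3 : 1 - r ^+ 2 * x != 0) (hx4 : x - r ^+ 2 != 0) (hA : 1 - A != 0) (hB : 1 - B != 0)
  (hm : (m <= n.+2)%N)
  (hnorm : aw_norm r m A B = rho * aw_norm r n A' B')
  (hcoef : forall j, block_coef r e0 e1 n A' B' A B j = C * aw_coef r m A B j)
  (hK : C = K * rho) :
  A6_block r e0 e1 (fun y => aw_norm r n A' B' * aw_sum r n y A' B') x A B
  = K * (aw_norm r m A B * aw_sum r m x A B).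
Proof.
have coef0 k : (n < k)%N -> aw_coef r n A' B' k = 0 by exact: aw_coef_eq0.
rewrite A6_block_scale (@A6_block_sum hr _ _ n n.+3); last by lia.
rewrite (@aw_sum_widen hr m n.+3); last by lia.
under eq_bigr do rewrite A6_block_basis //.
rewrite (@sum_three_term _ _ _ _ _ (fun k => aw_basis r k x)) ?block_alpha0 ?coef0 //; try by lia.
transitivity (aw_norm r n A' B' * \sum_(j < n.+3) C * (aw_coef r m A B j * aw_basis r j x)).
  congr (_ * _); apply: eq_bigr => j _.
  by rewrite -/(block_coef r e0 e1 n A' B' A B j) hcoef mulrA.
by rewrite -mulr_sumr hnorm hK; ring.
Qed.

End Assembly.

Section BlocksOnP.
Variables (F : fieldType) (r : F) (x x0 x1 : F) (n : nat).
Local Notation q := (r ^+ 4).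
Hypotheses (hr : r != 0) (hx : x != 0) (hx2 : 1 - x ^+ 2 != 0)
  (hx3 : 1 - r ^+ 2 * x != 0) (hx4 : x - r ^+ 2 != 0)
  (hx0 : x0 != 0) (hx1 : x1 != 0)
  (hA : forall m : nat, x0 ^+ 2 != q ^+ m) (hB : forall m : nat, x1 ^+ 2 != q ^+ m)
  (hAB : forall m : nat, x0 ^+ 2 * x1 ^+ 2 != q ^+ m)
  (hq : forall m : nat, (0 < m)%N -> q ^+ m != 1).

Let hA0 : x0 ^+ 2 != 0. Proof. by rewrite expf_neq0. Qed.
Let hB0 : x1 ^+ 2 != 0. Proof. by rewrite expf_neq0. Qed.
Let h1A : 1 - x0 ^+ 2 != 0. Proof. by rewrite subr_eq0 eq_sym (hA 0). Qed.
Let h1B : 1 - x1 ^+ 2 != 0. Proof. by rewrite subr_eq0 eq_sym (hB 0). Qed.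
Let hAm1 : x0 ^+ 2 - 1 != 0. Proof. by rewrite subr_eq0 (hA 0). Qed.
Let hBm1 : x1 ^+ 2 - 1 != 0. Proof. by rewrite subr_eq0 (hB 0). Qed.

Lemma sqr_shiftV z : (r ^- 2 * z) ^+ 2 = q^-1 * z ^+ 2.
Proof. by rewrite exprMn exprVn -exprM. Qed.

Lemma sqr_shift z : (r ^+ 2 * z) ^+ 2 = q * z ^+ 2.
Proof. by rewrite exprMn -exprM. Qed.

Lemma A6_block_P_mm : (0 < n)%N ->
  A6_block r false false (fun y => P r n y (r ^- 2 * x0) (r ^- 2 * x1)) x (x0 ^+ 2) (x1 ^+ 2) =
  r ^- (4 * n + 10) * (x0 ^+ 2 * x1 ^+ 2 - q ^+ (n + 2)) ^+ 2
    / ((1 - x0 ^+ 2) * (1 - x1 ^+ 2)) * P r n.+1 x x0 x1.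
Proof.
move=> hn; rewrite P_funE PE !sqr_shiftV.
eapply (@A6_block_aw _ r false false n n.+1); try eassumption.
- exact: leqnSn.
- exact: aw_norm_mm.
- by move=> j; apply: block_coef_mm.
have : x0 ^+ 2 * x1 ^+ 2 - q ^+ n.+2 != 0 by rewrite subr_eq0 hAB.
rewrite [r ^+ (4 * n + 10)]exprD [r ^+ (4 * n)]exprM [_ ^+ (n + 2)]exprD !qS expr0 => ?.
field; neq0_side.
by rewrite exprMn -!qS subr_eq0 hAB.
Qed.

Lemma A6_block_P_pm : (0 < n)%N ->
  A6_block r true false (fun y => P r n y (r ^+ 2 * x0) (r ^- 2 * x1)) x (x0 ^+ 2) (x1 ^+ 2) =
  - r ^- (4 * n + 6) * (x1 ^+ 2 - q ^+ n.+1) ^+ 2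
    / ((1 - x0 ^+ 2) * (1 - x1 ^+ 2)) * P r n x x0 x1.
Proof.
move=> hn; rewrite P_funE PE sqr_shift sqr_shiftV.
eapply (@A6_block_aw _ r true false n n); try eassumption.
- exact: leqW (leqnSn n).
- exact: aw_norm_pm.
- by move=> j; apply: block_coef_pm.
have : x1 ^+ 2 - q * q ^+ n != 0 by rewrite subr_eq0 -qS hB.
have : x0 ^+ 2 - q ^+ n != 0 by rewrite subr_eq0 hA.
rewrite [r ^+ (4 * n + 6)]exprD [r ^+ (4 * n)]exprM !qS => ? ?.
by field; neq0_side.
Qed.

Lemma A6_block_P_mp : (0 < n)%N ->
  A6_block r false true (fun y => P r n y (r ^- 2 * x0) (r ^+ 2 * x1)) x (x0 ^+ 2) (x1 ^+ 2) =
  - r ^- (4 * n + 6) * (x0 ^+ 2 - q ^+ n.+1) ^+ 2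
    / ((1 - x0 ^+ 2) * (1 - x1 ^+ 2)) * P r n x x0 x1.
Proof.
move=> hn; rewrite P_funE PE sqr_shift sqr_shiftV.
eapply (@A6_block_aw _ r false true n n); try eassumption.
- exact: leqW (leqnSn n).
- exact: aw_norm_mp.
- by move=> j; apply: block_coef_mp.
have : x0 ^+ 2 - q * q ^+ n != 0 by rewrite subr_eq0 -qS hA.
have : x1 ^+ 2 - q ^+ n != 0 by rewrite subr_eq0 hB.
rewrite [r ^+ (4 * n + 6)]exprD [r ^+ (4 * n)]exprM !qS => ? ?.
by field; neq0_side.
Qed.

Lemma A6_block_P_pp :
  A6_block r true true (fun y => P r n.+1 y (r ^+ 2 * x0) (r ^+ 2 * x1)) x (x0 ^+ 2) (x1 ^+ 2) =
  r ^- (4 * n.+1 + 2) * (1 - q ^+ n.+1) ^+ 2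
    / ((1 - x0 ^+ 2) * (1 - x1 ^+ 2)) * P r n x x0 x1.
Proof.
rewrite P_funE PE !sqr_shift.
eapply (@A6_block_aw _ r true true n.+1 n); try eassumption.
- exact: leqW (leqW (leqnSn n)).
- exact: aw_norm_pp.
- by move=> j; apply: block_coef_pp.
have : 1 - q * q ^+ n != 0 by rewrite subr_eq0 eq_sym -qS hq.
have : x0 ^+ 2 * x1 ^+ 2 - q ^+ n != 0 by rewrite subr_eq0 hAB.
rewrite [r ^+ (4 * n.+1 + 2)]exprD [r ^+ (4 * n.+1)]exprM !qS => ? ?.
by field; neq0_side.
Qed.

End BlocksOnP.

Unset Implicit Arguments. Set Strict Implicit.

Theorem mainTheorem5 (R : rcfType) (r : R[i])
  (hq : 0 < `|r ^+ 4| < 1)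
  (nu : nat -> R[i] -> R[i] -> R[i])
  (hnu : forall (m : nat) (a b : R[i]), nu m a b != 0)
  (n : nat) (hn : (1 <= n)%N)
  (x x0 x1 : R[i])
  (hx : x != 0) (hx2 : x ^+ 2 != 1) (hxr1 : r ^+ 2 * x != 1) (hxr2 : x != r ^+ 2)
  (hx0 : x0 != 0) (hx1 : x1 != 0)
  (hgen0 : forall m : int, x0 ^+ 2 != (r ^+ 4) ^ m)
  (hgen1 : forall m : int, x1 ^+ 2 != (r ^+ 4) ^ m)
  (hgen01 : forall m : int, x0 ^+ 2 * x1 ^+ 2 != (r ^+ 4) ^ m) :
  A6 r (Pbar r nu n) x x0 x1 =
  ((1 - x0 ^+ 2) * (1 - x1 ^+ 2))^-1 *
  ( nu n (r ^- 2 * x0) (r ^- 2 * x1) / nu n.+1 x0 x1 * r ^- (4 * n + 10)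
      * (x0 ^+ 2 * x1 ^+ 2 - (r ^+ 4) ^+ (n + 2)) ^+ 2 * Pbar r nu n.+1 x x0 x1
    - r ^- (4 * n + 6)
      * ( nu n (r ^+ 2 * x0) (r ^- 2 * x1) / nu n x0 x1 * (x1 ^+ 2 - (r ^+ 4) ^+ n.+1) ^+ 2
        + nu n (r ^- 2 * x0) (r ^+ 2 * x1) / nu n x0 x1 * (x0 ^+ 2 - (r ^+ 4) ^+ n.+1) ^+ 2 )
      * Pbar r nu n x x0 x1
    + nu n (r ^+ 2 * x0) (r ^+ 2 * x1) / nu n.-1 x0 x1 * r ^- (4 * n + 2)
      * (1 - (r ^+ 4) ^+ n) ^+ 2 * Pbar r nu n.-1 x x0 x1 ).
Proof.
case/andP: hq => hq0 hq1.
have hr : r != 0 by apply: contraTneq hq0 => ->; rewrite expr0n normr0 ltxx.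
have hqm m : (0 < m)%N -> (r ^+ 4) ^+ m != 1.
  move=> hm; apply/eqP => hqm1.
  have : `|(r ^+ 4) ^+ m| < 1 by rewrite normrX expr_lt1.
  by rewrite hqm1 normr1 ltxx.
have hA m : x0 ^+ 2 != (r ^+ 4) ^+ m := hgen0 m.
have hB m : x1 ^+ 2 != (r ^+ 4) ^+ m := hgen1 m.
have hAB m : x0 ^+ 2 * x1 ^+ 2 != (r ^+ 4) ^+ m := hgen01 m.
have h1x : 1 - x ^+ 2 != 0 by rewrite subr_eq0 eq_sym.
have h1rx : 1 - r ^+ 2 * x != 0 by rewrite subr_eq0 eq_sym.
have hxr : x - r ^+ 2 != 0 by rewrite subr_eq0.
have h1A : 1 - x0 ^+ 2 != 0 by rewrite subr_eq0 eq_sym (hA 0).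
have h1B : 1 - x1 ^+ 2 != 0 by rewrite subr_eq0 eq_sym (hB 0).
case: n hn => // n _.
rewrite A6E !A6_block_Pbar.
rewrite A6_block_P_pp // A6_block_P_pm // A6_block_P_mp // A6_block_P_mm //.
have := hnu n.+2 x0 x1; have := hnu n.+1 x0 x1; have := hnu n x0 x1.
rewrite /Pbar /= => ? ? ?.
by field; neq0_side.
Qed.
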